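(* Let $\vdash\subseteq Sqt$ and $\Gamma\subseteq Form$. (1) If $\Gamma$ is maximal $\vdash$-consistent, then $\Gamma$ is $\vdash$-prime. (2) If $\vdash$ satisfies (A) and (Cut), and $\Gamma$ is maximal $R_\to$-consistent and closed under $\wedge$ (i.e. $\alpha,\beta\in\Gamma\Rightarrow\alpha\wedge\beta\in\Gamma$), then $\Gamma$ is $\vdash$-prime.
   Context: $Form$: $\varphi::=p\mid\bot\mid(\varphi\wedge\varphi)\mid(\varphi\to\varphi)$ over a countable set $P0$ ($\wedge$ left-associative, binds tighter than $\to$). Sequents are pairs $(\Gamma,\varphi)$ with $\Gamma\subseteq Form$; $Sqt$ their set; $\Gamma\vdash\varphi$ means $(\Gamma,\varphi)\in\vdash$. (A): $\Gamma\cup\{\varphi\}\vdash\varphi$; (Cut): $\Gamma\cup\{\psi\}\vdash\varphi$ and $\Delta\vdash\psi$ imply $\Gamma\cup\Delta\vdash\varphi$. $\Gamma$ is $\vdash$-deduction closed iff $\Gamma\vdash\psi\Rightarrow\psi\in\Gamma$. $\Gamma$ is maximal $\varphi$-$\vdash$-consistent iff $\Gamma\nvdash\varphi$ and $\Gamma\cup\{\psi\}\vdash\varphi$ for all $\psi\notin\Gamma$; maximal $\vdash$-consistent iff maximal $\varphi$-$\vdash$-consistent for some $\varphi$. $\Phi R_\to\Delta$ iff for all $\varphi,\psi$, $\varphi\to\psi\in\Phi$ and $\varphi\in\Delta$ imply $\psi\in\Delta$. $\Phi(\Delta,\chi)=\{\psi:\exists\alpha\in\Delta,\ \Phi\vdash\alpha\wedge\chi\to\psi\}$.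 For a deduction closed $\Phi$, $\Delta$ is maximal $\Phi R_\to$-$\varphi$-consistent iff $\Delta\nvdash\varphi$, $\Phi R_\to\Delta$, and $\varphi\in\Phi(\Delta,\psi)$ for all $\psi\notin\Delta$; $\Delta$ is maximal $R_\to$-consistent iff it is maximal $\Phi R_\to$-$\varphi$-consistent for some $\varphi$ and some deduction closed $\Phi$. For $n\ge2$ and $\alpha,\beta_1,\dots,\beta_n\in Form$, $\vdash$ satisfies $(\alpha,\{\beta_1,\dots,\beta_n\})$ iff (i) for all $\Gamma\subseteq Form$, $\varphi\in Form$: if $\Gamma\cup\{\beta_i\}\vdash\varphi$ for all $i$, then $\Gamma\cup\{\alpha\}\vdash\varphi$; and (ii) for all $\varphi,\psi_1,\dots,\psi_n$: $\{\psi_i\wedge\beta_i\to\varphi: 1\le i\le n\}\vdash\psi_1\wedge\dots\wedge\psi_n\wedge\alpha\to\varphi$. $\Gamma$ is $\vdash$-prime iff for all $n\ge2$ and $\alpha,\beta_1,\dots,\beta_n$ such that $\vdash$ satisfies $(\alpha,\{\beta_1,\dots,\beta_n\})$ and $\alpha\in\Gamma$, some $\beta_i\in\Gamma$. *)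

From Stdlib Require Import List Arith.
Import ListNotations.

Section Defs.
Context {P0 : Type}.

Inductive form : Type :=
| Var : P0 -> form
| Bot : form
| And : form -> form -> form
| Imp : form -> form -> form.

(* Sets of formulas are predicates; a consequence relation |- is a set of
   sequents (Gamma, phi), i.e. a relation between sets of formulas and formulas. *)
Definition fset := form -> Prop.
Definition cons_rel := fset -> form -> Prop.

Definition setU (A B : fset) : fset := fun x => A x \/ B x.
Definition set1 (a : form) : fset := fun x => x = a.

Definition satA (vd : cons_rel) : Prop :=
  forall (G : fset) (phi : form), vd (setU G (set1 phi)) phi.

Definition satCut (vd : cons_rel) : Prop :=
  forall (G D : fset) (phi psi : form),
    vd (setU G (set1 psi)) phi -> vd D psi -> vd (setU G D) phi.

Definition ded_closed (vd : cons_rel) (G : fset) : Prop :=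
  forall psi, vd G psi -> G psi.

Definition max_cons_for (vd : cons_rel) (phi : form) (G : fset) : Prop :=
  ~ vd G phi /\ forall psi, ~ G psi -> vd (setU G (set1 psi)) phi.

Definition max_cons (vd : cons_rel) (G : fset) : Prop :=
  exists phi, max_cons_for vd phi G.

Definition R_imp (Phi D : fset) : Prop :=
  forall phi psi, Phi (Imp phi psi) -> D phi -> D psi.

Definition PhiDC (vd : cons_rel) (Phi D : fset) (chi : form) : fset :=
  fun psi => exists alpha, D alpha /\ vd Phi (Imp (And alpha chi) psi).

Definition max_R_cons_for (vd : cons_rel) (Phi : fset) (phi : form) (D : fset) : Prop :=
  ~ vd D phi /\ R_imp Phi D /\
  forall psi, ~ D psi -> PhiDC vd Phi D psi phi.

Definition max_R_cons (vd : cons_rel) (D : fset) : Prop :=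
  exists phi Phi, ded_closed vd Phi /\ max_R_cons_for vd Phi phi D.

Definition bigAnd (ps : list form) : form :=
  match ps with
  | [] => Bot (* not used: lists have length >= 2 *)
  | p :: ps' => fold_left And ps' p
  end.

(* |- satisfies (alpha, {beta_1,...,beta_n}), with bs = [beta_1; ...; beta_n] *)
Definition satisfies (vd : cons_rel) (alpha : form) (bs : list form) : Prop :=
  (forall (G : fset) (phi : form),
      (forall i, i < length bs -> vd (setU G (set1 (nth i bs Bot))) phi) ->
      vd (setU G (set1 alpha)) phi)
  /\
  (forall (phi : form) (ps : list form), length ps = length bs ->
      vd (fun x => exists i, i < length bs /\
                     x = Imp (And (nth i ps Bot) (nth i bs Bot)) phi)
         (Imp (And (bigAnd ps) alpha) phi)).

Definition prime (vd : cons_rel) (G : fset) : Prop :=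
  forall (alpha : form) (bs : list form),
    2 <= length bs -> satisfies vd alpha bs -> G alpha ->
    exists i, i < length bs /\ G (nth i bs Bot).

End Defs.

Arguments form : clear implicits.
Arguments fset : clear implicits.
Arguments cons_rel : clear implicits.

(* Suppose alpha is in Gamma but no beta_i is. In case (1), maximality gives
   Gamma, beta_i |- phi for every i, so condition (i) yields Gamma, alpha |- phi,
   i.e. Gamma |- phi. In case (2), maximality gives psi_i in Gamma with
   Phi |- psi_i /\ beta_i -> phi; condition (ii), monotonicity (from (A) and
   (Cut)) and deduction closure put psi_1 /\ ... /\ psi_n /\ alpha -> phi into
   Phi, and since the antecedent lies in Gamma, Phi R_-> Gamma puts phi into
   Gamma. Either way Gamma |- phi, contradicting consistency. *)
From Stdlib Require Import List Arith Lia Classical.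
From Stdlib Require Import FunctionalExtensionality PropExtensionality.

Section Primeness.
Variable P0 : Type.
Implicit Types (G S T : fset P0) (a c : form P0) (ps : list (form P0)).

Lemma setU_set1_id G a : G a -> setU G (set1 a) = G.
Proof.
  intro Ga; apply functional_extensionality; intro x.
  apply propositional_extensionality; unfold setU, set1; split.
  - intros [Gx | ->]; assumption.
  - now left.
Qed.

Lemma nth_choice (Q : nat -> form P0 -> Prop) (n : nat) :
  (forall i, i < n -> exists a, Q i a) ->
  exists ps, length ps = n /\ forall i, i < n -> Q i (nth i ps Bot).
Proof.
  revert Q; induction n as [|n IH]; intros Q HQ.
  - exists nil; split; [reflexivity | intros; lia].
  - destruct (HQ 0 ltac:(lia)) as [a Qa].
    destruct (IH (fun i => Q (S i))) as [ps [Hlen Hps]].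
    { intros i Hi; apply HQ; lia. }
    exists (a :: ps); split; [simpl; lia |].
    intros [|i] Hi; [exact Qa | apply Hps; simpl; lia].
Qed.

Lemma fold_left_And_closed G :
  (forall a b, G a -> G b -> G (And a b)) ->
  forall ps p, G p -> (forall x, In x ps -> G x) -> G (fold_left And ps p).
Proof.
  intros HAnd ps; induction ps as [|q ps IH]; intros p Gp Hps; simpl; [exact Gp |].
  apply IH; [apply HAnd; [exact Gp | apply Hps; now left] |].
  intros x Hx; apply Hps; now right.
Qed.

Lemma bigAnd_closed G ps :
  (forall a b, G a -> G b -> G (And a b)) ->
  ps <> nil -> (forall i, i < length ps -> G (nth i ps Bot)) -> G (bigAnd ps).
Proof.
  intros HAnd Hne Hps; destruct ps as [|p ps]; [contradiction |].
  simpl; apply fold_left_And_closed; [exact HAnd | apply (Hps 0); simpl; lia |].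
  intros x Hx; destruct (In_nth ps x Bot Hx) as [k [Hk <-]].
  apply (Hps (S k)); simpl; lia.
Qed.

Variable vd : cons_rel P0.

Lemma vd_mono S T c :
  satA vd -> satCut vd -> (forall x, S x -> T x) -> vd S c -> vd T c.
Proof.
  intros HA HCut HST HS.
  assert (ET : setU T S = T).
  { apply functional_extensionality; intro x.
    apply propositional_extensionality; unfold setU.
    split; [intros [Tx | Sx]; auto | now left]. }
  rewrite <- ET; exact (HCut T S c c (HA T c) HS).
Qed.

Lemma vd_of_mem G a : satA vd -> G a -> vd G a.
Proof. intros HA Ga; rewrite <- (setU_set1_id G a Ga); apply HA. Qed.

Lemma max_cons_prime G : max_cons vd G -> prime vd G.
Proof.
  intros [phi [Hcons Hmax]] alpha bs _ [Hsat _] Galpha.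
  apply NNPP; intro Hnone.
  apply Hcons; rewrite <- (setU_set1_id G alpha Galpha).
  apply Hsat; intros i Hi; apply Hmax.
  intro Gb; apply Hnone; now exists i.
Qed.

Lemma max_R_cons_prime G :
  satA vd -> satCut vd -> max_R_cons vd G ->
  (forall a b, G a -> G b -> G (And a b)) -> prime vd G.
Proof.
  intros HA HCut [phi [Phi [Hded [Hcons [HR Hmax]]]]] HAnd alpha bs Hlen
    [_ Hsat] Galpha.
  apply NNPP; intro Hnone.
  destruct (nth_choice
              (fun i a => G a /\ vd Phi (Imp (And a (nth i bs Bot)) phi))
              (length bs)) as [ps [Hps Hchoice]].
  { intros i Hi; apply Hmax; intro Gb; apply Hnone; now exists i. }
  assert (Phi_imp : Phi (Imp (And (bigAnd ps) alpha) phi)).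
  { apply Hded; refine (vd_mono _ _ _ HA HCut _ (Hsat phi ps Hps)).
    intros x [i [Hi ->]]; apply Hded, Hchoice, Hi. }
  assert (G_ps : G (bigAnd ps)).
  { apply bigAnd_closed; [exact HAnd | intros ->; simpl in Hps; lia |].
    intros i Hi; apply Hchoice; lia. }
  apply Hcons, vd_of_mem; [exact HA |].
  exact (HR _ _ Phi_imp (HAnd _ _ G_ps Galpha)).
Qed.

End Primeness.

Theorem mainTheorem11 (P0 : Type)
  (P0_countable : exists f : P0 -> nat, forall x y, f x = f y -> x = y)
  (vd : cons_rel P0) (G : fset P0) :
  (max_cons vd G -> prime vd G) /\
  (satA vd -> satCut vd -> max_R_cons vd G ->
     (forall a b, G a -> G b -> G (And a b)) -> prime vd G).
Proof.
  split.
  - apply max_cons_prime.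
  - apply max_R_cons_prime.
Qed.
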